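(* Let $\mathcal{A}=\mathcal{A}_1\cup\mathcal{A}_2\cup\mathcal{A}_3$ be an arrangement of $9$ lines in $\mathbb{P}^2\mathbb{C}$ defined by a $(3,3)$-net. Then every intersection point of $\mathcal{A}$ is a double or a triple point. The $9$ mixed triple points are always triple points. Moreover, the number of non-mixed triple points (each lying inside a single class $\mathcal{A}_i$) is $0$, $1$ or $3$; in particular, no such net has exactly $11$ triple points. More precisely, exactly one of the following holds. (1) $\mathcal{A}$ has no double points and $12$ triple points: the $9$ mixed ones and one triple point inside each $\mathcal{A}_i$. In this case $\mathcal{A}$ is lattice isomorphic to the Ceva arrangement $(x^3-y^3)(y^3-z^3)(z^3-x^3)=0$. (2) $\mathcal{A}$ has $9$ double points, and its only triple points are the $9$ mixed triple points. In this case $\mathcal{A}$ is lattice isomorphic to the Hesse-type arrangement obtained as the union of three of the four singular fibers of the Hesse pencil $a(x^3+y^3+z^3)+b\,xyz$; each singular fiber is a union of three lines. (3) $\mathcal{A}$ has $6$ double points and $10$ triple points: the $9$ mixed ones and one triple point inside exactly one of the $\mathcal{A}_i$. In this case $\mathcal{A}$ is lattice isomorphic to the arrangement with lines $L_1=(y)$, $L_2=(\tfrac1b x+y+z)$, $L_3=(\tfrac{b}{b-1}x+z)$, $L_4=(x)$, $L_5=(x+by+z)$, $L_6=(by+z)$, $L_7=(x+b(1-b)y)$, $L_8=(x+y+z)$, $L_9=(z)$, for some $b\in\mathbb{C}\setminus\{0,1\}$ with $b^3\neq -1$. All three cases occur.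
   Context: A $(3,q)$-net in $\mathbb{P}^2\mathbb{C}$ is a line arrangement $\mathcal{A}$ together with a partition $\mathcal{A}=\mathcal{A}_1\sqcup\mathcal{A}_2\sqcup\mathcal{A}_3$ with $|\mathcal{A}_i|=q$ for each $i$, such that every intersection point of two lines from different classes lies on exactly one line of each class. Equivalently, $\mathcal{A}$ is defined by $Q_1Q_2Q_3=0$ where $Q_1,Q_2$ span a pencil of degree-$q$ curves and $Q_3=Q_1+Q_2$, each $Q_i$ being a product of $q$ distinct linear forms. A mixed triple point is a point lying on one line from each of $\mathcal{A}_1,\mathcal{A}_2,\mathcal{A}_3$; there are exactly $q^2$ of them, namely the base points $Q_1=Q_2=0$. A point of multiplicity $k$ (double, triple, quadruple, quintuple point) is a point lying on exactly $k$ lines of the arrangement. Two line arrangements are lattice isomorphic if there is a bijection between their sets of lines under which a set of lines is concurrent in one arrangement exactly when the corresponding set is concurrent in the other, i.e. the intersection lattices are isomorphic. *)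

From HB Require Import structures.
From mathcomp Require Import all_boot all_order all_algebra.
From Stdlib Require Import ClassicalEpsilon.
Set Implicit Arguments. Unset Strict Implicit. Unset Printing Implicit Defensive.
Import Order.TTheory GRing.Theory Num.Theory.
Local Open Scope ring_scope.

Definition pb (P : Prop) : bool :=
  if excluded_middle_informative P then true else false.

Section Arr.
Variable C : numClosedFieldType.

(* Homogeneous coordinates: points and lines of P^2 are nonzero row vectors
   of length 3, taken up to scalar. *)
Definition vec3 (a b c : C) : 'rV[C]_3 := \row_(k < 3) nth 0 [:: a; b; c] k.

Definition on_line (p l : 'rV[C]_3) : bool := \sum_(k < 3) p 0 k * l 0 k == 0.

(* Lines are indexed by (class i, position j); class i is A_{i+1}. *)
Definition lineIdx := ('I_3 * 'I_3)%type.
Definition class (i : 'I_3) : {set lineIdx} := [set l : lineIdx | l.1 == i].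

Definition is_arrangement (L : lineIdx -> 'rV[C]_3) : Prop :=
  (forall l, L l != 0) /\
  (forall l1 l2, l1 != l2 -> ~ exists c : C, L l1 = c *: L l2).

Definition is_33_net (L : lineIdx -> 'rV[C]_3) : Prop :=
  is_arrangement L /\
  forall (p : 'rV[C]_3) (i j a b : 'I_3), p != 0 -> i != j ->
    on_line p (L (i, a)) -> on_line p (L (j, b)) ->
    forall k : 'I_3, #|[set m : 'I_3 | on_line p (L (k, m))]| = 1%N.

Definition through (L : lineIdx -> 'rV[C]_3) (p : 'rV[C]_3) : {set lineIdx} :=
  [set l | on_line p (L l)].

(* Projective points of multiplicity k >= 2 are in bijection with the sets
   of lines through them; pts L k is the set of points of multiplicity k. *)
Definition pts (L : lineIdx -> 'rV[C]_3) (k : nat) : {set {set lineIdx}} :=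
  [set S : {set lineIdx} |
     pb (exists p, p != 0 /\ through L p = S) && (#|S| == k)].

Definition n_inner_triple (L : lineIdx -> 'rV[C]_3) (i : 'I_3) : nat :=
  #|[set S in pts L 3 | S \subset class i]|.

Definition n_nonmixed_triple (L : lineIdx -> 'rV[C]_3) : nat :=
  #|[set S in pts L 3 | [exists i, S \subset class i]]|.

Definition concurrent (L : lineIdx -> 'rV[C]_3) (S : {set lineIdx}) : Prop :=
  exists p, p != 0 /\ forall l, l \in S -> on_line p (L l).

Definition lattice_iso (L M : lineIdx -> 'rV[C]_3) : Prop :=
  exists f : lineIdx -> lineIdx, bijective f /\
    forall S : {set lineIdx}, concurrent L S <-> concurrent M (f @: S).

(* Ceva arrangement (x^3-y^3)(y^3-z^3)(z^3-x^3), w a primitive cube root of 1: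
   lines x - w^j y, y - w^j z, z - w^j x. *)
Definition ceva (w : C) (l : lineIdx) : 'rV[C]_3 :=
  match (l.1 : nat) with
  | 0%N => vec3 1 (- w ^+ l.2) 0
  | 1%N => vec3 0 1 (- w ^+ l.2)
  | _ => vec3 (- w ^+ l.2) 0 1
  end.

(* The four singular fibres of the Hesse pencil a(x^3+y^3+z^3)+b xyz:
   fibre 3 is xyz = 0 (lines x, y, z); fibre f < 3 is
   x^3+y^3+z^3 - 3 w^f xyz = 0, the product of x + w^(j+f) y + w^(2j) z. *)
Definition hesse_line (w : C) (f : 'I_4) (j : 'I_3) : 'rV[C]_3 :=
  if (f : nat) == 3%N then \row_(k < 3) (k == j)%:R
  else vec3 1 (w ^+ (j + f)) (w ^+ (2 * j)).

Definition hesse (w : C) (om : 'I_4) (l : lineIdx) : 'rV[C]_3 :=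
  hesse_line w (lift om l.1) l.2.

Definition case3_arr (b : C) (l : lineIdx) : 'rV[C]_3 :=
  nth 0 [:: vec3 0 1 0; vec3 b^-1 1 1; vec3 (b / (b - 1)) 0 1;
            vec3 1 0 0; vec3 1 b 1; vec3 0 b 1;
            vec3 1 (b * (1 - b)) 0; vec3 1 1 1; vec3 0 0 1]
    (3 * l.1 + l.2)%N.

Definition case1 (L : lineIdx -> 'rV[C]_3) : Prop :=
  #|pts L 2| = 0%N /\ #|pts L 3| = 12%N /\
  (forall i, n_inner_triple L i = 1%N) /\
  exists w : C, w ^+ 2 + w + 1 = 0 /\ lattice_iso L (ceva w).

Definition case2 (L : lineIdx -> 'rV[C]_3) : Prop :=
  #|pts L 2| = 9%N /\ #|pts L 3| = 9%N /\ n_nonmixed_triple L = 0%N /\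
  exists (w : C) (om : 'I_4), w ^+ 2 + w + 1 = 0 /\ lattice_iso L (hesse w om).

Definition case3 (L : lineIdx -> 'rV[C]_3) : Prop :=
  #|pts L 2| = 6%N /\ #|pts L 3| = 10%N /\
  (exists i, n_inner_triple L i = 1%N /\
     forall i', i' != i -> n_inner_triple L i' = 0%N) /\
  exists b : C, b != 0 /\ b != 1 /\ b ^+ 3 != -1 /\ lattice_iso L (case3_arr b).

End Arr.

(* For a (3,3)-net:
   - a point on lines of two different classes is one of the nine mixed
     points; the meet of (0, a) and (1, b) lies on (2, latin a b), where
     latin is a latin square (through_mixed_pt);
   - any other point lies on lines of a single class, so it is a double
     point, or a triple point exactly when that class is concurrent.
   Hence the numbers of double and triple points depend only on the set of
   concurrent classes (card_pts2, card_pts3).  A centroid argument shows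
   that two concurrent classes force the third (conc_third), so 0, 1 or 3
   classes are concurrent.  Every latin square of order 3 is isotopic to
   addition in Z/3 (latin3_affine), and the concurrent sets of lines are
   described by the latin square and the concurrent classes (conc_char), so
   nets with the same concurrent classes are lattice isomorphic.  Finally the
   Ceva, Hesse and case-3 arrangements are nets with 3, 0 and 1 concurrent
   classes, which is certified by exact computation in the Eisenstein
   integers. *)

From HB Require Import structures.
From mathcomp Require Import all_boot all_order all_algebra.
From mathcomp Require Import perm ring zify.
From Stdlib Require Import ClassicalEpsilon.
Set Implicit Arguments. Unset Strict Implicit. Unset Printing Implicit Defensive.
Import Order.TTheory GRing.Theory Num.Theory.
Local Open Scope ring_scope.

Lemma ord3 (b : 'I_3) : [\/ b = 0, b = 1 | b = 2].
Proof.
by case: b => [[|[|[|//]]] Hb]; [apply: Or31|apply: Or32|apply: Or33]; apply/val_inj.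
Qed.

Lemma sum_ord3 (V : nmodType) (F : 'I_3 -> V) : \sum_i F i = F 0 + F 1 + F 2.
Proof.
rewrite !big_ord_recr big_ord0 /= add0r.
by congr (_ + _ + _); congr F; apply/val_inj.
Qed.

Section Coordinates.
Variable C : numClosedFieldType.
Implicit Types (p q u v : 'rV[C]_3) (c : C).

Lemma vec3_0 (a b c : C) : vec3 a b c 0 0 = a. Proof. by rewrite /vec3 !mxE. Qed.
Lemma vec3_1 (a b c : C) : vec3 a b c 0 1 = b. Proof. by rewrite /vec3 !mxE. Qed.
Lemma vec3_2 (a b c : C) : vec3 a b c 0 2 = c. Proof. by rewrite /vec3 !mxE. Qed.
Definition vec3E := (vec3_0, vec3_1, vec3_2).

Lemma vec3_eta u : u = vec3 (u 0 0) (u 0 1) (u 0 2).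
Proof.
apply/rowP => k; rewrite /vec3 mxE.
by case: k => [[|[|[|//]]] Hk] /=; congr (u _ _); apply/val_inj.
Qed.

Lemma vec3_ext u v : u 0 0 = v 0 0 -> u 0 1 = v 0 1 -> u 0 2 = v 0 2 -> u = v.
Proof. by move=> h0 h1 h2; rewrite (vec3_eta u) (vec3_eta v) h0 h1 h2. Qed.

Lemma vec3_inj (a b c a' b' c' : C) :
  vec3 a b c = vec3 a' b' c' -> [/\ a = a', b = b' & c = c'].
Proof.
have coord k (w w' : 'rV[C]_3) : w = w' -> w 0 k = w' 0 k by move=> ->.
by move=> E; split; [move: (coord 0 _ _ E) | move: (coord 1 _ _ E) | move: (coord 2 _ _ E)];
  rewrite !vec3E.
Qed.

Lemma scale_coord c u k : (c *: u) 0 k = c * u 0 k.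
Proof. by rewrite mxE. Qed.

Lemma vec3_zero : vec3 (0 : C) 0 0 = 0.
Proof. by apply: vec3_ext; rewrite !vec3E mxE. Qed.

Lemma vec3_neq0 u : u != 0 -> [\/ u 0 0 != 0, u 0 1 != 0 | u 0 2 != 0].
Proof.
move=> H; apply/or3P; apply: contraR H; rewrite !negb_or !negbK.
by case/and3P => /eqP a /eqP b /eqP c; apply/eqP; rewrite (vec3_eta u) a b c vec3_zero.
Qed.

Definition dot u v := u 0 0 * v 0 0 + u 0 1 * v 0 1 + u 0 2 * v 0 2.

Definition cross u v := vec3 (u 0 1 * v 0 2 - u 0 2 * v 0 1)
  (u 0 2 * v 0 0 - u 0 0 * v 0 2) (u 0 0 * v 0 1 - u 0 1 * v 0 0).

Lemma dotC u v : dot u v = dot v u.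
Proof. by rewrite /dot; ring. Qed.

Lemma on_lineE p u : on_line p u = (dot u p == 0).
Proof.
rewrite dotC /on_line /dot !big_ord_recr big_ord0 /= add0r.
by congr (_ + _ + _ == _); congr (_ * _); congr (_ _ _); apply/val_inj.
Qed.

Lemma dotZr c u v : dot u (c *: v) = c * dot u v.
Proof. by rewrite /dot !mxE; ring. Qed.

Lemma dotDr u v w : dot u (v + w) = dot u v + dot u w.
Proof. by rewrite /dot !mxE; ring. Qed.

Lemma dot0r u : dot u 0 = 0.
Proof. by rewrite /dot !mxE !mulr0 !addr0. Qed.

Lemma dot_cross_l u v : dot (cross u v) u = 0.
Proof. by rewrite /dot /cross !vec3E; ring. Qed.

Lemma dot_cross_r u v : dot (cross u v) v = 0.
Proof. by rewrite /dot /cross !vec3E; ring. Qed.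

Lemma cross_scale c u : cross (c *: u) u = 0.
Proof. by apply: vec3_ext; rewrite /cross !vec3E !mxE; ring. Qed.

Lemma cross_eq0 u v : u != 0 -> cross u v = 0 -> exists c, v = c *: u.
Proof.
move=> /vec3_neq0 Hu; rewrite -vec3_zero /cross.
move=> /vec3_inj[/subr0_eq h0 /subr0_eq h1 /subr0_eq h2].
case: Hu => Hk; [exists (v 0 0 / u 0 0) | exists (v 0 1 / u 0 1) | exists (v 0 2 / u 0 2)];
  apply/esym/vec3_ext; rewrite !mxE ?divfK // mulrAC; apply: (canLR (mulfK Hk));
  rewrite [LHS]mulrC [RHS]mulrC;
  first [exact: h0 | exact: h1 | exact: h2 | exact: esym h0 | exact: esym h1 | exact: esym h2].
Qed.

Lemma meet_unique u v p : cross u v != 0 -> dot u p = 0 -> dot v p = 0 ->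
  exists c, p = c *: cross u v.
Proof.
move=> Hn hu hv; apply: cross_eq0 => //.
have -> : cross (cross u v) p = (dot u p) *: v - (dot v p) *: u.
  by apply: vec3_ext; rewrite /cross /dot !vec3E !mxE; ring.
by rewrite hu hv !scale0r subr0.
Qed.

Lemma crossC u v : cross v u = - cross u v.
Proof. by apply: vec3_ext; rewrite /cross !mxE /=; ring. Qed.

Lemma cross_neq0 u v : v != 0 -> ~ (exists c, u = c *: v) -> cross u v != 0.
Proof.
move=> Hv Hn; apply/eqP => H; apply: Hn; apply: (cross_eq0 Hv).
by rewrite crossC H oppr0.
Qed.

Lemma on_lineZ c p u : c != 0 -> on_line (c *: p) u = on_line p u.
Proof. by move=> Hc; rewrite !on_lineE dotZr mulf_eq0 (negbTE Hc). Qed.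

Lemma on_lineZr c p u : c != 0 -> on_line p (c *: u) = on_line p u.
Proof.
by move=> Hc; rewrite !on_lineE dotC dotZr dotC mulf_eq0 (negbTE Hc).
Qed.

Lemma dot_neq0_witness u : u != 0 -> exists r, dot u r != 0.
Proof.
case/vec3_neq0 => h; [exists (vec3 1 0 0) | exists (vec3 0 1 0) | exists (vec3 0 0 1)];
  by move: h; rewrite /dot !vec3E !mulr1 !mulr0 ?addr0 ?add0r.
Qed.

End Coordinates.

Section NetBasics.
Variable C : numClosedFieldType.
Variable L : lineIdx -> 'rV[C]_3.
Hypothesis HL : is_33_net L.
Implicit Types (p q : 'rV[C]_3) (x y : lineIdx) (i j k a b c : 'I_3).

Lemma pair_neq i j a b : i != j -> (i, a) != (j, b) :> lineIdx.
Proof. by move=> Hij; rewrite xpair_eqE (negbTE Hij). Qed.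

Lemma lines_cross x y : x != y -> cross (L x) (L y) != 0.
Proof. by case: HL => [[H1 H2] _] Hne; apply: cross_neq0 => //; apply: H2. Qed.

Lemma net_card p i j a b k : p != 0 -> i != j -> on_line p (L (i, a)) ->
  on_line p (L (j, b)) -> #|[set m | on_line p (L (k, m))]| = 1%N.
Proof. by case: HL => _ H Hp Hij Ha Hb; apply: (H p i j a b). Qed.

Lemma net_uniq p i j a b k m m' : p != 0 -> i != j -> on_line p (L (i, a)) ->
  on_line p (L (j, b)) -> on_line p (L (k, m)) -> on_line p (L (k, m')) -> m = m'.
Proof.
move=> Hp Hij Ha Hb Hm Hm'.
have /eqP/cards1P[x Ex] := net_card k Hp Hij Ha Hb.
have : m \in [set m | on_line p (L (k, m))] by rewrite inE.
have : m' \in [set m | on_line p (L (k, m))] by rewrite inE.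
by rewrite Ex !inE => /eqP -> /eqP ->.
Qed.

Lemma net_ex p i j a b k : p != 0 -> i != j -> on_line p (L (i, a)) ->
  on_line p (L (j, b)) -> exists m, on_line p (L (k, m)).
Proof.
move=> Hp Hij Ha Hb.
have /eqP/cards1P[x Ex] := net_card k Hp Hij Ha Hb.
exists x; have : x \in [set x] by rewrite inE.
by rewrite -Ex inE.
Qed.

Lemma same_lines x y p q : x != y -> p != 0 -> q != 0 ->
  on_line p (L x) -> on_line p (L y) -> on_line q (L x) -> on_line q (L y) ->
  forall l, on_line q (L l) = on_line p (L l).
Proof.
move=> Hxy Hp Hq; rewrite !on_lineE => /eqP hpx /eqP hpy /eqP hqx /eqP hqy l.
have [c Ec] := meet_unique (lines_cross Hxy) hpx hpy.
have [d Ed] := meet_unique (lines_cross Hxy) hqx hqy.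
have cn : c != 0 by apply: contraNneq Hp => c0; rewrite Ec c0 scale0r.
have dn : d != 0 by apply: contraNneq Hq => d0; rewrite Ed d0 scale0r.
by rewrite Ec Ed !on_lineZ.
Qed.

Definition meet x y : 'rV[C]_3 := cross (L x) (L y).

Lemma meet_neq0 x y : x != y -> meet x y != 0.
Proof. exact: lines_cross. Qed.

Lemma meet_onl x y : on_line (meet x y) (L x).
Proof. by rewrite on_lineE dotC dot_cross_l. Qed.

Lemma meet_onr x y : on_line (meet x y) (L y).
Proof. by rewrite on_lineE dotC dot_cross_r. Qed.

Lemma meet_lines x y p : x != y -> p != 0 -> on_line p (L x) -> on_line p (L y) ->
  forall l, on_line p (L l) = on_line (meet x y) (L l).
Proof.
by move=> Hxy Hp; apply: same_lines (meet_neq0 Hxy) Hp (meet_onl _ _) (meet_onr _ _).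
Qed.

Definition third i j k a b : 'I_3 :=
  odflt 0 [pick c | on_line (meet (i, a) (j, b)) (L (k, c))].

Lemma thirdP i j k a b : i != j -> on_line (meet (i, a) (j, b)) (L (k, third i j k a b)).
Proof.
move=> Hij; rewrite /third; case: pickP => [c Hc //| Hnone] /=.
have [m Hm] := net_ex k (meet_neq0 (pair_neq a b Hij)) Hij (meet_onl _ _) (meet_onr _ _).
by rewrite Hnone in Hm.
Qed.

Lemma third_uniq i j k a b c : i != j -> on_line (meet (i, a) (j, b)) (L (k, c)) ->
  c = third i j k a b.
Proof.
move=> Hij Hc; apply: (net_uniq (meet_neq0 (pair_neq a b Hij)) Hij (meet_onl _ _)
  (meet_onr _ _) Hc); exact: thirdP.
Qed.

Lemma third_inj_r i j k a : i != j -> i != k -> injective (third i j k a).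
Proof.
move=> Hij Hik b b' E.
have Hb' : on_line (meet (i, a) (j, b')) (L (k, third i j k a b)) by rewrite E thirdP.
have E2 := same_lines (pair_neq a (third i j k a b) Hik) (meet_neq0 (pair_neq a b Hij))
  (meet_neq0 (pair_neq a b' Hij)) (meet_onl _ _) (thirdP k a b Hij) (meet_onl _ _) Hb'.
apply: (net_uniq (meet_neq0 (pair_neq a b Hij)) Hij (meet_onl _ _) (meet_onr _ _)
  (meet_onr _ _)).
by rewrite -E2 meet_onr.
Qed.

Lemma third_inj_l i j k b : i != j -> j != k -> injective (third i j k ^~ b).
Proof.
move=> Hij Hjk a a' /= E.
have Ha' : on_line (meet (i, a') (j, b)) (L (k, third i j k a b)) by rewrite E thirdP.
have E2 := same_lines (pair_neq b (third i j k a b) Hjk) (meet_neq0 (pair_neq a b Hij))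
  (meet_neq0 (pair_neq a' b Hij)) (meet_onr _ _) (thirdP k a b Hij) (meet_onr _ _) Ha'.
apply: (net_uniq (meet_neq0 (pair_neq a b Hij)) Hij (meet_onl _ _) (meet_onr _ _)
  (meet_onl _ _)).
by rewrite -E2 meet_onl.
Qed.

Lemma center_off i j p : i != j -> p != 0 -> (forall b, on_line p (L (j, b))) ->
  forall a, ~~ on_line p (L (i, a)).
Proof.
move=> Hij Hp Hall a; apply/negP => Ha.
by have := net_uniq Hp Hij Ha (Hall 0) (Hall 0) (Hall 1).
Qed.

End NetBasics.

(* Write the meet of (i, a) and (j, b) in the
   affine chart {dot (cross Q P) x = dot (cross Q P) R} as
   alpha a *: Q + beta b *: P + R.  A line (k, c) passes through the three
   meets (i, a), (j, sigma a) for a permutation sigma of 'I_3, hence through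
   their sum, which is the same point for all c. *)
Section ThirdClassConcurrent.
Variable C : numClosedFieldType.
Variable L : lineIdx -> 'rV[C]_3.
Hypothesis HL : is_33_net L.
Variables (i j k : 'I_3) (P Q R : 'rV[C]_3).
Hypotheses (Hij : i != j) (Hik : i != k) (Hjk : j != k) (HP : P != 0) (HQ : Q != 0).
Hypotheses (HPi : forall a, on_line P (L (i, a))) (HQj : forall b, on_line Q (L (j, b))).
Hypothesis HR : dot (cross Q P) R != 0.

Let Q_off a : dot (L (i, a)) Q != 0.
Proof. by rewrite -on_lineE; apply: (center_off HL Hij). Qed.

Let P_off b : dot (L (j, b)) P != 0.
Proof. by rewrite -on_lineE; apply: (center_off HL _ HP HPi); rewrite eq_sym. Qed.

Definition alpha a := - dot (L (i, a)) R / dot (L (i, a)) Q.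
Definition beta b := - dot (L (j, b)) R / dot (L (j, b)) P.
Definition chart_pt a b := alpha a *: Q + beta b *: P + R.

Let chart_dot a b : dot (cross Q P) (chart_pt a b) = dot (cross Q P) R.
Proof. by rewrite /chart_pt !dotDr !dotZr dot_cross_l dot_cross_r !mulr0 !add0r. Qed.

Let chart_neq0 a b : chart_pt a b != 0.
Proof. by apply: contraNneq HR => E; rewrite -(chart_dot a b) E dot0r. Qed.

Let chart_on_i a b : on_line (chart_pt a b) (L (i, a)).
Proof.
have := HPi a; rewrite on_lineE => /eqP Pa.
by rewrite on_lineE /chart_pt !dotDr !dotZr Pa mulr0 addr0 /alpha divfK ?Q_off // addNr.
Qed.

Let chart_on_j a b : on_line (chart_pt a b) (L (j, b)).
Proof.
have := HQj b; rewrite on_lineE => /eqP Qb.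
by rewrite on_lineE /chart_pt !dotDr !dotZr Qb mulr0 add0r /beta divfK ?P_off // addNr.
Qed.

Definition centroid := (\sum_a alpha a) *: Q + (\sum_b beta b) *: P + 3%:R *: R.

Lemma centroid_neq0 : centroid != 0.
Proof.
apply: contraNneq HR => E.
have : dot (cross Q P) centroid = 3%:R * dot (cross Q P) R.
  by rewrite /centroid !dotDr !dotZr dot_cross_l dot_cross_r !mulr0 !add0r.
by rewrite E dot0r => /esym/eqP; rewrite mulf_eq0 pnatr_eq0 /= => /eqP ->.
Qed.

Lemma centroid_on c : on_line centroid (L (k, c)).
Proof.
pose sigma a := third L i k j a c.
have sigma_inj : injective sigma by apply: (third_inj_l HL); rewrite // eq_sym.
have on_kc a : on_line (chart_pt a (sigma a)) (L (k, c)).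
  rewrite (meet_lines HL (pair_neq a (sigma a) Hij) (chart_neq0 a (sigma a))
    (chart_on_i _ _) (chart_on_j _ _)).
  have Hm := thirdP HL j a c Hik.
  rewrite -(meet_lines HL (pair_neq a (sigma a) Hij) (meet_neq0 HL (pair_neq a c Hik))
    (meet_onl _ _ _) Hm); exact: meet_onr.
rewrite on_lineE.
have -> : dot (L (k, c)) centroid = \sum_a dot (L (k, c)) (chart_pt a (sigma a)).
  rewrite /centroid /chart_pt !dotDr !dotZr.
  under [RHS]eq_bigr do rewrite !dotDr !dotZr.
  move: (dot _ Q) (dot _ P) (dot _ R) => x y z.
  rewrite !big_split /= -!mulr_suml sumr_const card_ord mulr_natl.
  by congr (_ + _ * _ + _); apply: (reindex_inj sigma_inj).
by rewrite big1 // => a _; apply/eqP; rewrite -on_lineE.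
Qed.

End ThirdClassConcurrent.

(* Two concurrent classes force the third: the centers P and Q are distinct
   points, so a point R off the line PQ provides the chart above. *)
Lemma conc_third (C : numClosedFieldType) (L : lineIdx -> 'rV[C]_3) i j k :
  is_33_net L -> i != j -> i != k -> j != k ->
  concurrent L (class i) -> concurrent L (class j) -> concurrent L (class k).
Proof.
move=> HL Hij Hik Hjk [P [HP HPi]] [Q [HQ HQj]].
have onP a : on_line P (L (i, a)) by apply: HPi; rewrite inE.
have onQ b : on_line Q (L (j, b)) by apply: HQj; rewrite inE.
have HQP : cross Q P != 0.
  apply: cross_neq0 => // -[c Ec].
  have cn : c != 0 by apply: contraNneq HQ => c0; rewrite Ec c0 scale0r.
  have onPj b : on_line P (L (j, b)) by rewrite -(on_lineZ _ _ cn) -Ec.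
  by have := center_off HL Hij HP onPj 0; rewrite onP.
have [R HR] := dot_neq0_witness HQP.
exists (centroid L i j P Q R); split; first exact: centroid_neq0.
by move=> [k' c]; rewrite inE => /eqP /= ->; apply: centroid_on.
Qed.

Definition transversal (a b c : 'I_3) : {set lineIdx} := [set (0, a); (1, b); (2, c)].

Lemma card_transversal a b c : #|transversal a b c| = 3%N.
Proof. by rewrite /transversal -setUA !cardsU1 cards1 !inE !xpair_eqE. Qed.

Lemma transversal_inj a b c a' b' c' :
  transversal a b c = transversal a' b' c' -> a = a' /\ b = b'.
Proof.
move=> E.
have h0 : ((0 : 'I_3), a) \in transversal a' b' c' by rewrite -E !inE eqxx.
have h1 : ((1 : 'I_3), b) \in transversal a' b' c' by rewrite -E !inE eqxx orbT.
by rewrite !inE !xpair_eqE /= ?orbF in h0 h1; move/eqP: h0 => ->; move/eqP: h1 => ->.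
Qed.

Lemma transversal_not_sub a b c i : ~~ (transversal a b c \subset class i).
Proof.
apply/negP => /subsetP H.
have h0 : ((0 : 'I_3), a) \in class i by apply: H; rewrite !inE eqxx.
have h1 : ((1 : 'I_3), b) \in class i by apply: H; rewrite !inE eqxx orbT.
by rewrite !inE /= in h0 h1; move/eqP: h0 => h0; move/eqP: h1; rewrite -h0.
Qed.

Lemma card_class i : #|class i| = 3%N.
Proof.
have -> : class i = setX [set i] setT by apply/setP => -[k m]; rewrite !inE andbT.
by rewrite cardsX cards1 cardsT card_ord.
Qed.

Lemma class_sub i j : (class j \subset class i) = (j == i).
Proof.
apply/idP/idP => [/subsetP H|/eqP -> //].
have : (j, 0) \in class i by apply: H; rewrite inE.
by rewrite inE.
Qed.

Lemma class_inj : injective class.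
Proof. by move=> i j E; apply/eqP; rewrite -class_sub E. Qed.

Lemma setD1_of_card (T : finType) (A S : {set T}) :
  S \subset A -> #|S|.+1 = #|A| -> exists2 x, x \in A & S = A :\ x.
Proof.
move=> HS Hc.
have : #|A :\: S| == 1%N by rewrite cardsD (setIidPr HS) -Hc subSnn.
move/cards1P => [x Ex].
have : x \in A :\: S by rewrite Ex inE.
rewrite inE => /andP[xS xA]; exists x => //.
apply/setP => l; rewrite !inE; apply/idP/idP => [Hl|/andP[Hlx HlA]].
  by rewrite (subsetP HS _ Hl) andbT; apply: contraNneq xS => <-.
apply/negPn; apply: contra Hlx => HlS.
have : l \in A :\: S by rewrite !inE HlS HlA.
by rewrite Ex inE.
Qed.

Lemma card_classD1 x : #|class x.1 :\ x| = 2%N.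
Proof. by have := cardsD1 x (class x.1); rewrite card_class inE eqxx add1n => -[]. Qed.

Lemma classD1_inj : injective (fun x : lineIdx => class x.1 :\ x).
Proof.
move=> [i a] [j b] /= E.
have [c Hc] : exists c : 'I_3, c != a by exists (a + 1); rewrite -subr_eq0 addrAC subrr add0r.
have : (i, c) \in class j :\ (j, b) by rewrite -E !inE xpair_eqE eqxx /= Hc.
rewrite !inE /= => /andP[_ /eqP eij]; subst j.
case: (eqVneq a b) => [-> //|hab].
have : (i, a) \in class i :\ (i, b) by rewrite !inE xpair_eqE eqxx /= hab.
by rewrite -E !inE eqxx.
Qed.

Lemma small_sub_pair (S : {set lineIdx}) : (#|S| <= 2)%N ->
  exists y z, y != z /\ S \subset [set y; z].
Proof.
have other (y : lineIdx) : exists z, y != z.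
  by exists (if y == (0, 0) then (0, 1) else (0, 0)); case: (eqVneq y (0, 0)) => [->|].
move=> H2; case: (leqP #|S| 1) => [H1|H1].
  case: (posnP #|S|) => [/cards0_eq ->|Hpos]; first by exists (0, 0), (0, 1); rewrite sub0set.
  have /cards1P [y ->] : #|S| == 1%N by rewrite eqn_leq H1 Hpos.
  have [z Hz] := other y; exists y, z; split => //.
  by apply/subsetP => l; rewrite !inE => ->.
have /cards2P [y [z [Hyz ->]]] : #|S| == 2%N by rewrite eqn_leq H2 H1.
by exists y, z.
Qed.

Lemma pbP (P : Prop) : reflect P (pb P).
Proof. by rewrite /pb; case: excluded_middle_informative => h; constructor. Qed.

Section Points.
Variable C : numClosedFieldType.
Variable L : lineIdx -> 'rV[C]_3.
Hypothesis HL : is_33_net L.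
Implicit Types (p q : 'rV[C]_3) (x y : lineIdx) (i a b : 'I_3).

Definition mixed_pt a b := meet L (0, a) (1, b).

Definition latin a b := third L 0 1 2 a b.

Lemma latin_inj_r a : injective (latin a).
Proof. exact: third_inj_r. Qed.

Lemma latin_inj_l b : injective (latin ^~ b).
Proof. exact: third_inj_l. Qed.

Lemma mixed_pt_neq0 a b : mixed_pt a b != 0.
Proof. exact: meet_neq0. Qed.

Lemma through_mixed_pt a b : through L (mixed_pt a b) = transversal a b (latin a b).
Proof.
have uniq k m m' := net_uniq HL (mixed_pt_neq0 a b) (isT : (0 : 'I_3) != 1)
  (meet_onl _ _ _) (meet_onr _ _ _) (k := k) (m := m) (m' := m').
apply/setP => -[k m]; rewrite !inE !xpair_eqE.
case: (ord3 k) => -> /=; rewrite ?orbF ?orFb; apply/idP/idP.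
- by move=> H; rewrite (uniq _ _ _ H (meet_onl _ _ _)).
- by move/eqP ->; exact: meet_onl.
- by move=> H; rewrite (uniq _ _ _ H (meet_onr _ _ _)).
- by move/eqP ->; exact: meet_onr.
- by move/third_uniq => -> //.
- by move/eqP ->; exact: thirdP.
Qed.

Lemma through_mixed p x y : p != 0 -> on_line p (L x) -> on_line p (L y) ->
  x.1 != y.1 -> exists a b, through L p = transversal a b (latin a b).
Proof.
case: x => i a0; case: y => j b0 /= Hp Hx Hy Hij.
have [a Ha] := net_ex HL 0 Hp Hij Hx Hy.
have [b Hb] := net_ex HL 1 Hp Hij Hx Hy.
exists a, b; rewrite -through_mixed_pt; apply/setP => l.
by rewrite !inE (meet_lines HL (isT : ((0 : 'I_3), a) != (1, b)) Hp Ha Hb).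
Qed.

Lemma through_same_class p x y : p != 0 -> x != y -> x.1 = y.1 ->
  on_line p (L x) -> on_line p (L y) -> through L p \subset class x.1.
Proof.
case: x y => [i a] [j b] /= Hp Hxy Eij Ha Hb; subst j.
apply/subsetP => -[k m]; rewrite !inE /= => Hl; apply/negPn/negP => Hki.
have Eab := net_uniq HL Hp Hki Hl Ha Ha Hb.
by move: Hxy; rewrite Eab eqxx.
Qed.

Lemma through_cases p : p != 0 ->
  (exists a b, through L p = transversal a b (latin a b)) \/
  (exists i, through L p \subset class i).
Proof.
move=> Hp.
case: (boolP [exists x in through L p, exists y in through L p, x.1 != y.1]).
  move=> /exists_inP[x Hx /exists_inP[y Hy Hxy]]; left.
  by rewrite !inE in Hx Hy; apply: (through_mixed Hp Hx Hy Hxy).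
move=> /exists_inPn Hn; right.
case: (set_0Vmem (through L p)) => [->|[x Hx]]; first by exists 0; apply: sub0set.
exists x.1; apply/subsetP => y Hy; rewrite inE.
by have /exists_inPn/(_ y Hy) := Hn x Hx; rewrite negbK eq_sym.
Qed.

Lemma through_le3 p : p != 0 -> (#|through L p| <= 3)%N.
Proof.
case/through_cases => [[a [b ->]]|[i Hi]]; first by rewrite card_transversal.
by apply: leq_trans (subset_leq_card Hi) _; rewrite card_class.
Qed.

Lemma double_or_triple p : p != 0 -> (2 <= #|through L p|)%N ->
  #|through L p| = 2%N \/ #|through L p| = 3%N.
Proof.
move=> Hp H2; have := through_le3 Hp.
by case: (#|through L p|) H2 => [|[|[|[|]]]] //; [left|right].
Qed.

Lemma mixed_triple p : p != 0 -> (forall i, exists a, on_line p (L (i, a))) ->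
  #|through L p| = 3%N.
Proof.
move=> Hp H; have [a Ha] := H 0; have [b Hb] := H 1.
have [a' [b' ->]] := through_mixed (x := (0, a)) (y := (1, b)) Hp Ha Hb isT.
exact: card_transversal.
Qed.

Lemma through_center p i : p != 0 -> (forall a, on_line p (L (i, a))) ->
  through L p = class i.
Proof.
move=> Hp H; apply/eqP; rewrite eq_sym eqEcard card_class through_le3 // andbT.
by apply/subsetP => -[k m]; rewrite !inE => /eqP /= ->.
Qed.

Definition conc_classes : {set 'I_3} := [set i | pb (concurrent L (class i))].

Lemma conc_classesP i : reflect (concurrent L (class i)) (i \in conc_classes).
Proof. by rewrite inE; apply: pbP. Qed.

Lemma conc_class_at p x y : p != 0 -> x != y -> x.1 = y.1 ->
  on_line p (L x) -> on_line p (L y) -> concurrent L (class x.1) ->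
  through L p = class x.1.
Proof.
move=> Hp Hxy Exy Hx Hy [q [Hq Hcq]].
have qx : on_line q (L x) by apply: Hcq; rewrite inE.
have qy : on_line q (L y) by apply: Hcq; rewrite inE Exy.
apply: through_center => // a; rewrite (same_lines HL Hxy Hq Hp qx qy) //.
by apply: Hcq; rewrite inE.
Qed.

Lemma pts3_eq : pts L 3 =
  [set transversal ab.1 ab.2 (latin ab.1 ab.2) | ab in [set: 'I_3 * 'I_3]]
  :|: [set class i | i in conc_classes].
Proof.
apply/setP => S; rewrite /pts inE in_setU; apply/idP/idP.
- case/andP => /pbP [p [Hp <-]] /eqP H3.
  case: (through_cases Hp) => [[a [b E]]|[i Hi]].
    by apply/orP; left; apply/imsetP; exists (a, b); rewrite ?inE.
  have E : through L p = class i by apply/eqP; rewrite eqEcard Hi card_class H3.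
  apply/orP; right; apply/imsetP; exists i => //.
  by apply/conc_classesP; exists p; split => // l; rewrite -E inE.
- case/orP => /imsetP [x Hx ->].
    rewrite card_transversal eqxx andbT; apply/pbP.
    by exists (mixed_pt x.1 x.2); split; [exact: mixed_pt_neq0 | exact: through_mixed_pt].
  rewrite card_class eqxx andbT; apply/pbP.
  move/conc_classesP: Hx => [q [Hq Hq2]]; exists q; split => //.
  by apply: through_center => // a; apply: Hq2; rewrite inE.
Qed.

Lemma card_pts3 : #|pts L 3| = (9 + #|conc_classes|)%N.
Proof.
have tinj : injective (fun ab : 'I_3 * 'I_3 => transversal ab.1 ab.2 (latin ab.1 ab.2)).
  by move=> [a b] [a' b'] /= /transversal_inj [-> ->].
rewrite pts3_eq cardsU (card_imset _ tinj) (card_imset _ class_inj) cardsT card_prod card_ord.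
suff -> : [set transversal ab.1 ab.2 (latin ab.1 ab.2) | ab in [set: 'I_3 * 'I_3]]
  :&: [set class i | i in conc_classes] = set0 by rewrite cards0 subn0.
apply/setP => S; rewrite !inE; apply/negP => /andP[/imsetP[x _ ->] /imsetP[i _ E]].
by move: (transversal_not_sub x.1 x.2 (latin x.1 x.2) i); rewrite E subxx.
Qed.

Lemma double_point p : p != 0 -> #|through L p| = 2%N ->
  exists2 x, x.1 \notin conc_classes & through L p = class x.1 :\ x.
Proof.
move=> Hp H2; case: (through_cases Hp) => [[a [b E]]|[i Hi]].
  by move: H2; rewrite E card_transversal.
have Hcard : #|through L p|.+1 = #|class i| by rewrite H2 card_class.
have [x xi Ex] := setD1_of_card Hi Hcard.
move: xi; rewrite inE => /eqP xi; exists x; rewrite xi //.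
apply/negP => /conc_classesP Hc.
move/eqP/cards2P: H2 => [y [z [Hyz ES]]].
have yp : y \in through L p by rewrite ES !inE eqxx.
have zp : z \in through L p by rewrite ES !inE eqxx orbT.
have := subsetP Hi _ yp; have := subsetP Hi _ zp; rewrite !inE in yp zp *.
move=> /eqP zi /eqP yi.
have := conc_class_at Hp Hyz (etrans yi (esym zi)) yp zp; rewrite yi => /(_ Hc) E.
by have := card_class i; rewrite -E ES cards2 Hyz.
Qed.

Lemma pair_point x : x.1 \notin conc_classes ->
  exists2 p, p != 0 & through L p = class x.1 :\ x.
Proof.
move=> Hx; move: (card_classD1 x) => /eqP /cards2P [y [z [Hyz Ecl]]].
have : y \in class x.1 :\ x by rewrite Ecl !inE eqxx.
have : z \in class x.1 :\ x by rewrite Ecl !inE eqxx orbT.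
rewrite !inE => /andP[zx /eqP zi] /andP[yx /eqP yi].
have Hp := meet_neq0 HL Hyz.
have Hsub : through L (meet L y z) \subset class x.1.
  by rewrite -yi; apply: through_same_class (meet_onl _ _ _) (meet_onr _ _ _); rewrite ?yi.
have Hyz_in : [set y; z] \subset through L (meet L y z).
  by apply/subsetP => l; rewrite !inE => /orP[] /eqP ->; rewrite ?meet_onl ?meet_onr.
have Hx_out : x \notin through L (meet L y z).
  rewrite inE; apply: contra Hx => Hxp; apply/conc_classesP.
  exists (meet L y z); split => // l Hl; case: (eqVneq l x) => [-> //|Hlx].
  have : l \in [set y; z] by rewrite -Ecl in_setD1 Hlx Hl.
  by move/(subsetP Hyz_in); rewrite inE.
exists (meet L y z) => //; rewrite Ecl; apply/eqP; rewrite eqEsubset Hyz_in andbT -Ecl.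
apply/subsetP => l Hl; rewrite in_setD1 (subsetP Hsub l Hl) andbT.
by apply: contraNneq Hx_out => <-.
Qed.

Lemma pts2_eq :
  pts L 2 = [set class x.1 :\ x | x in [set x : lineIdx | x.1 \notin conc_classes]].
Proof.
apply/setP => S; rewrite /pts inE; apply/idP/imsetP.
- case/andP => /pbP [p [Hp <-]] /eqP H2.
  by have [x Hx ->] := double_point Hp H2; exists x; rewrite // inE.
- move=> [x]; rewrite inE => /pair_point [p Hp Ep] ->.
  by rewrite card_classD1 eqxx andbT; apply/pbP; exists p.
Qed.

Lemma card_pts2 : #|pts L 2| = ((3 - #|conc_classes|) * 3)%N.
Proof.
rewrite pts2_eq (card_imset _ classD1_inj).
have -> : [set x : lineIdx | x.1 \notin conc_classes] = setX (~: conc_classes) setT.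
  by apply/setP => -[i a]; rewrite !inE andbT.
by rewrite cardsX cardsT card_ord cardsCs setCK card_ord.
Qed.

Lemma n_inner_triple_eq i : n_inner_triple L i = (i \in conc_classes).
Proof.
rewrite /n_inner_triple.
have -> : [set S in pts L 3 | S \subset class i] =
          if i \in conc_classes then [set class i] else set0.
  apply/setP => S; rewrite inE pts3_eq in_setU.
  apply/idP/idP.
  - case/andP => /orP[/imsetP[x _ ->]|/imsetP[j Hj ->]] Hsub.
      by move: Hsub; rewrite (negbTE (transversal_not_sub _ _ _ _)).
    by rewrite class_sub in Hsub; rewrite -(eqP Hsub) Hj inE.
  - case Hc : (i \in conc_classes); last by rewrite inE.
    rewrite inE => /eqP ->; rewrite subxx andbT; apply/orP; right.
    by apply/imsetP; exists i.
by case: (i \in conc_classes); rewrite ?cards1 ?cards0.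
Qed.

Lemma n_nonmixed_triple_eq : n_nonmixed_triple L = #|conc_classes|.
Proof.
rewrite /n_nonmixed_triple -(card_imset _ class_inj).
congr #|pred_of_set _|; apply/setP => S; rewrite inE pts3_eq in_setU; apply/idP/idP.
- case/andP => /orP[/imsetP[x _ ->]|//] /existsP[i Hsub].
  by move: Hsub; rewrite (negbTE (transversal_not_sub _ _ _ _)).
- move=> HS; rewrite HS orbT /=; case/imsetP: HS => j _ ->.
  by apply/existsP; exists j.
Qed.

Lemma conc_sub (S S' : {set lineIdx}) : S \subset S' -> concurrent L S' -> concurrent L S.
Proof. by move=> /subsetP H [p [Hp Hl]]; exists p; split => // l /H; apply: Hl. Qed.

Lemma conc_char (S : {set lineIdx}) : concurrent L S <->
  [\/ (#|S| <= 2)%N, exists a b, S \subset transversal a b (latin a b) |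
      exists i, concurrent L (class i) /\ S \subset class i].
Proof.
split.
- move=> [p [Hp Hl]].
  have Hsub : S \subset through L p by apply/subsetP => l Hs; rewrite inE; apply: Hl.
  case: (leqP #|S| 2) => H2; first by apply: Or31.
  case: (through_cases Hp) => [[a [b E]]|[i Hi]].
    by apply: Or32; exists a, b; rewrite -E.
  apply: Or33; exists i; split; last exact: subset_trans Hsub Hi.
  have E : through L p = class i.
    by apply/eqP; rewrite eqEcard Hi card_class (leq_trans H2 (subset_leq_card Hsub)).
  by exists p; split => // l; rewrite -E inE.
- case=> [/small_sub_pair [y [z [Hyz H]]]|[a [b H]]|[i [Hc H]]]; apply: (conc_sub H).
  + exists (meet L y z); split; first exact: meet_neq0.
    by move=> l; rewrite !inE => /orP[] /eqP ->; rewrite ?meet_onl ?meet_onr.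
  + exists (mixed_pt a b); split; first exact: mixed_pt_neq0.
    by move=> l; rewrite -through_mixed_pt inE.
  + exact: Hc.
Qed.

End Points.

Lemma nonzero_sum3 (x y z : 'I_3) : x != 0 -> y != 0 -> z != 0 -> x + y + z = 0 -> x = y.
Proof.
case: x => [[|[|[|//]]] hx]; case: y => [[|[|[|//]]] hy]; case: z => [[|[|[|//]]] hz];
  move=> ex ey ez /(congr1 val) e; apply/val_inj; move: ex ey ez e; rewrite /=; done.
Qed.

(* Every latin square of order 3 is isotopic to the addition table of Z/3:
   two rows differ by a constant shift. *)
Lemma latin3_affine (T : 'I_3 -> 'I_3 -> 'I_3) :
  (forall a, injective (T a)) -> (forall b, injective (T^~ b)) ->
  forall a b, T a b = (T a 0 - T 0 0) + T 0 b.
Proof.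
move=> Hr Hc a b.
case: (eqVneq a 0) => [-> | Ha]; first by rewrite subrr add0r.
pose d x := T a x - T 0 x.
have dn x : d x != 0 by rewrite /d subr_eq0; apply: contra_neq Ha => /Hc.
have row_sum c : \sum_x T c x = \sum_x x by symmetry; exact: (reindex_inj (Hr c)).
have ds : d 0 + d 1 + d 2 = 0 by rewrite -sum_ord3 /d sumrB !row_sum subrr.
have d01 : d 0 = d 1 := nonzero_sum3 (dn 0) (dn 1) (dn 2) ds.
have d12 : d 1 = d 2 by apply: (nonzero_sum3 (dn 1) (dn 2) (dn 0)); rewrite addrC addrA.
have db : d b = d 0 by case: (ord3 b) => ->; rewrite ?d01 ?d12.
by rewrite -/(d 0) -db /d subrK.
Qed.

Lemma subset_imset_inj (T1 T2 : finType) (f : T1 -> T2) (A B : {set T1}) :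
  injective f -> (f @: A \subset f @: B) = (A \subset B).
Proof.
move=> fi; apply/idP/idP; last exact: imsetS.
move=> H; apply/subsetP => x Hx.
by have := subsetP H _ (imset_f f Hx); rewrite mem_imset.
Qed.

(* By
   latin3_affine each latin square is latin a b = row a + col b with
   bijections row, col : 'I_3 -> 'I_3; matching rows and columns of the two
   squares gives a bijection of lines preserving the description conc_char
   of concurrent sets. *)
Section Isomorphism.
Variable C : numClosedFieldType.

Definition row_part (N : lineIdx -> 'rV[C]_3) a := latin N a 0 - latin N 0 0.
Definition col_part (N : lineIdx -> 'rV[C]_3) b := latin N 0 b.

Lemma latin_split N : is_33_net N -> forall a b, latin N a b = row_part N a + col_part N b.
Proof.
by move=> HN a b; apply: latin3_affine; [apply: (latin_inj_r HN) | apply: (latin_inj_l HN)].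
Qed.

Lemma row_part_inj N : is_33_net N -> injective (row_part N).
Proof. by move=> HN a a' /addIr; apply: (latin_inj_l HN). Qed.

Lemma col_part_inj N : is_33_net N -> injective (col_part N).
Proof. by move=> HN; apply: (@latin_inj_r _ _ HN 0). Qed.

Variables L M : lineIdx -> 'rV[C]_3.
Hypotheses (HL : is_33_net L) (HM : is_33_net M).
Hypothesis Hcc : conc_classes L = conc_classes M.

Definition match_rows := invF (row_part_inj HM) \o row_part L.
Definition match_cols := invF (col_part_inj HM) \o col_part L.

Definition match_class (i : 'I_3) : 'I_3 -> 'I_3 :=
  if i == 0 then match_rows else if i == 1 then match_cols else id.

Lemma match_class_inj i : injective (match_class i).
Proof.
rewrite /match_class; case: ifP => _; last case: ifP => _ //.
  exact: inj_comp (can_inj (f_invF _)) (row_part_inj HL).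
exact: inj_comp (can_inj (f_invF _)) (col_part_inj HL).
Qed.

Definition match_line (l : lineIdx) : lineIdx := (l.1, match_class l.1 l.2).

Lemma match_line_inj : injective match_line.
Proof. by move=> [i a] [j b] [/= eij]; subst j => /match_class_inj ->. Qed.

Lemma match_transversal a b : match_line @: transversal a b (latin L a b) =
  transversal (match_rows a) (match_cols b) (latin M (match_rows a) (match_cols b)).
Proof.
rewrite /transversal !imsetU !imset_set1 /match_line /match_class /=.
by rewrite (latin_split HM) /match_rows /match_cols /= !f_invF -(latin_split HL).
Qed.

Lemma match_class_set i : match_line @: class i = class i.
Proof.
apply/setP => -[j m]; rewrite inE /=; apply/imsetP/idP.
- by move=> [[k n]]; rewrite inE => Hk [-> _].
- move=> /eqP ->; exists (i, invF (@match_class_inj i) m); first by rewrite inE.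
  by rewrite /match_line /= f_invF.
Qed.

Lemma iso_of_conc_classes : lattice_iso L M.
Proof.
have conc_iff i : concurrent L (class i) <-> concurrent M (class i).
  by split => /conc_classesP H; apply/conc_classesP; rewrite ?Hcc // -Hcc.
have Hmr : injective match_rows := @match_class_inj 0.
have Hmc : injective match_cols := @match_class_inj 1.
exists match_line; split; first exact: injF_bij match_line_inj.
move=> S; rewrite (conc_char HL S) (conc_char HM (match_line @: S)).
rewrite (card_imset _ match_line_inj).
split.
- case=> [H|[a [b H]]|[i [Hc H]]]; [apply: Or31 | apply: Or32 | apply: Or33] => //.
    by exists (match_rows a), (match_cols b); rewrite -match_transversal imsetS.
  by exists i; split; [apply/conc_iff | rewrite -match_class_set imsetS].
- case=> [H|[a' [b' H]]|[i [Hc H]]]; [apply: Or31 | apply: Or32 | apply: Or33] => //.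
    exists (invF Hmr a'), (invF Hmc b').
    rewrite -(subset_imset_inj _ _ match_line_inj) match_transversal.
    by rewrite !(f_invF Hmr, f_invF Hmc).
  exists i; split; first by apply/conc_iff.
  by rewrite -(subset_imset_inj _ _ match_line_inj) match_class_set.
Qed.

End Isomorphism.

Section Relabel.
Variable C : numClosedFieldType.
Variable L : lineIdx -> 'rV[C]_3.
Variable s : {perm 'I_3}.

Definition relabel_line (l : lineIdx) : lineIdx := (s l.1, l.2).

Lemma relabel_line_bij : bijective relabel_line.
Proof.
exists (fun l : lineIdx => ((s^-1)%g l.1, l.2)) => -[i a];
  by rewrite /relabel_line /= ?permK ?permKV.
Qed.

Definition relabel (l : lineIdx) := L (relabel_line l).

Lemma conc_relabel (S : {set lineIdx}) : concurrent relabel S <-> concurrent L (relabel_line @: S).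
Proof.
split => -[p [Hp H]]; exists p; split => //.
- by move=> l /imsetP[l0 Hl0 ->]; apply: H.
- by move=> l Hl; apply: H; apply: imset_f.
Qed.

Lemma relabel_class j : relabel_line @: class j = class (s j).
Proof.
apply/setP => -[k m]; rewrite inE /=; apply/imsetP/idP.
- by move=> [[k' n]]; rewrite inE => /eqP /= -> [-> _].
- by move=> /eqP ->; exists (j, m); rewrite ?inE.
Qed.

Lemma relabel_net : is_33_net L -> is_33_net relabel.
Proof.
have [g gK Kg] := relabel_line_bij.
case=> [[H0 H1] H2]; split; first split.
- by move=> l; apply: H0.
- by move=> l1 l2 Hne; apply: H1; apply: contra_neq Hne; apply: (can_inj gK).
- move=> p j k a b Hp Hjk Ha Hb k'.
  apply: (H2 p (s j) (s k) a b Hp _ Ha Hb (s k')).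
  by apply: contra_neq Hjk => /perm_inj.
Qed.

Lemma relabel_conc_classes j : (j \in conc_classes relabel) = (s j \in conc_classes L).
Proof.
by apply/conc_classesP/conc_classesP; rewrite conc_relabel relabel_class.
Qed.

Lemma relabel_iso (M : lineIdx -> 'rV[C]_3) : lattice_iso relabel M -> lattice_iso L M.
Proof.
have [g gK Kg] := relabel_line_bij.
move=> [f [fb Hf]]; exists (f \o g); split; first exact: bij_comp fb (Bijective Kg gK).
move=> S; rewrite imset_comp -Hf conc_relabel -imset_comp.
suff -> : [set relabel_line (g x) | x in S] = S by [].
by apply/setP => l; apply/imsetP/idP => [[l0 H0 ->]|Hl]; [rewrite Kg|exists l; rewrite ?Kg].
Qed.

End Relabel.

(* Exact arithmetic in the Eisenstein integers Z[w], w^2 + w + 1 = 0, with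
   x = (m, n) standing for m + n w.  The model arrangements have coordinates
   in Z[w], so their net axioms and the concurrency of their classes are
   decided by computation and then transported to C. *)
Definition eis := (int * int)%type.
Definition eis0 : eis := (0, 0).
Definition eis1 : eis := (1, 0).
Definition eis_int (n : int) : eis := (n, 0).
Definition eis_add (x y : eis) : eis := (x.1 + y.1, x.2 + y.2).
Definition eis_opp (x : eis) : eis := (- x.1, - x.2).
Definition eis_sub (x y : eis) : eis := eis_add x (eis_opp y).
Definition eis_mul (x y : eis) : eis :=
  (x.1 * y.1 - x.2 * y.2, x.1 * y.2 + x.2 * y.1 - x.2 * y.2).
Fixpoint eis_wpow (n : nat) : eis := if n is n'.+1 then eis_mul (eis_wpow n') (0, 1) else eis1.

Definition eis3 := (eis * eis * eis)%type.
Definition eis3_0 : eis3 := (eis0, eis0, eis0).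
Definition eis_cross (u v : eis3) : eis3 :=
  (eis_sub (eis_mul u.1.2 v.2) (eis_mul u.2 v.1.2),
   eis_sub (eis_mul u.2 v.1.1) (eis_mul u.1.1 v.2),
   eis_sub (eis_mul u.1.1 v.1.2) (eis_mul u.1.2 v.1.1)).
Definition eis_dot (u v : eis3) : eis :=
  eis_add (eis_add (eis_mul u.1.1 v.1.1) (eis_mul u.1.2 v.1.2)) (eis_mul u.2 v.2).
Definition eis_det (u v x : eis3) : eis := eis_dot (eis_cross u v) x.

Definition ord3s : seq 'I_3 := [:: 0; 1; 2].

Lemma all_ord3 (P : pred 'I_3) : all P ord3s -> forall i, P i.
Proof. by move=> /and4P[h0 h1 h2 _] i; case: (ord3 i) => ->. Qed.

Lemma card_ord3 (P : pred 'I_3) : #|[set m | P m]| = count P ord3s.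
Proof.
rewrite -sum1_card big_mkcond sum_ord3 /= !inE.
by case: (P 0); case: (P 1); case: (P 2).
Qed.

Definition net_certificate (Nz : lineIdx -> eis3) : bool :=
  all (fun i => all (fun a => Nz (i, a) != eis3_0) ord3s) ord3s &&
  all (fun i1 => all (fun a1 => all (fun i2 => all (fun a2 =>
     ((i1, a1) == (i2, a2)) || (eis_cross (Nz (i1, a1)) (Nz (i2, a2)) != eis3_0))
     ord3s) ord3s) ord3s) ord3s &&
  all (fun i => all (fun j => (i == j) || all (fun a => all (fun b => all (fun k =>
     count (fun m => eis_det (Nz (i, a)) (Nz (j, b)) (Nz (k, m)) == eis0) ord3s == 1%N)
     ord3s) ord3s) ord3s) ord3s) ord3s.

Section Eisenstein.
Variable C : numClosedFieldType.
Variable w : C.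
Hypothesis Hw : w ^+ 2 + w + 1 = 0.

Definition eval (x : eis) : C := x.1%:~R + x.2%:~R * w.

Lemma eval_add x y : eval (eis_add x y) = eval x + eval y.
Proof. by rewrite /eval /eis_add /= !rmorphD /=; ring. Qed.

Lemma eval_opp x : eval (eis_opp x) = - eval x.
Proof. by rewrite /eval /eis_opp /= !rmorphN /=; ring. Qed.

Lemma eval_sub x y : eval (eis_sub x y) = eval x - eval y.
Proof. by rewrite /eis_sub eval_add eval_opp. Qed.

Lemma eval_mul x y : eval (eis_mul x y) = eval x * eval y.
Proof.
rewrite /eval /eis_mul /= !(rmorphB, rmorphD, rmorphM) /=.
apply/eqP; rewrite -subr_eq0; apply/eqP.
transitivity (- (x.2%:~R * y.2%:~R) * (w ^+ 2 + w + 1) : C); first ring.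
by rewrite Hw mulr0.
Qed.

Lemma eval_int n : eval (eis_int n) = n%:~R.
Proof. by rewrite /eval /= mulr0z mul0r addr0. Qed.

Lemma eval0 : eval eis0 = 0. Proof. exact: (eval_int 0). Qed.
Lemma eval1 : eval eis1 = 1. Proof. exact: (eval_int 1). Qed.

Lemma eval_wpow n : eval (eis_wpow n) = w ^+ n.
Proof.
elim: n => [|n IH]; first exact: eval1.
by rewrite /= eval_mul IH exprSr /eval /= mulr0z mulr1z mul1r add0r.
Qed.

(* eval is injective: the norm m^2 - m n + n^2 of m + n w vanishes only at 0. *)
Lemma eval_eq0 x : (eval x == 0) = (x == eis0).
Proof.
apply/idP/idP => [/eqP H|/eqP ->]; last by rewrite eval0.
case: x H => m n; rewrite /eval /= => H.
have E : ((m ^+ 2 - m * n + n ^+ 2 : int)%:~R : C) = 0.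
  have -> : ((m ^+ 2 - m * n + n ^+ 2 : int)%:~R : C) =
     (m%:~R + n%:~R * w) * (m%:~R - n%:~R - n%:~R * w) + n%:~R ^+ 2 * (w ^+ 2 + w + 1).
    by rewrite rmorphD rmorphB rmorphM !rmorphXn /=; ring.
  by rewrite H Hw !mulr0 mul0r addr0.
move/eqP: E; rewrite intr_eq0 => /eqP E.
by have [-> ->] : m = 0 /\ n = 0 by split; nia.
Qed.

Definition eval3 (u : eis3) : 'rV[C]_3 := vec3 (eval u.1.1) (eval u.1.2) (eval u.2).

Lemma eval3_cross u v : cross (eval3 u) (eval3 v) = eval3 (eis_cross u v).
Proof. by rewrite /cross /eval3 !vec3E /eis_cross /= !eval_sub !eval_mul. Qed.

Lemma eval3_dot u v : dot (eval3 u) (eval3 v) = eval (eis_dot u v).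
Proof. by rewrite /dot /eval3 !vec3E /eis_dot !eval_add !eval_mul. Qed.

Lemma eval3_eq0 u : (eval3 u == 0) = (u == eis3_0).
Proof.
apply/idP/idP => [/eqP H|/eqP ->]; last by rewrite /eval3 /= eval0 vec3_zero.
case: u H => -[x y] z; rewrite /eval3 /= -vec3_zero => /vec3_inj[/eqP h1 /eqP h2 /eqP h3].
by move: h1 h2 h3; rewrite !eval_eq0 => /eqP -> /eqP -> /eqP ->.
Qed.

Section Certificate.
Variable Nz : lineIdx -> eis3.
Hypothesis Hc : net_certificate Nz.
Let N l := eval3 (Nz l).

Lemma cert_cross l1 l2 : l1 != l2 -> cross (N l1) (N l2) != 0.
Proof.
case/andP: Hc => /andP[_ h2] _; case: l1 => i1 a1; case: l2 => i2 a2 => Hne.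
rewrite /N eval3_cross eval3_eq0.
move/all_ord3: h2 => /(_ i1) /all_ord3 /(_ a1) /all_ord3 /(_ i2) /all_ord3 /(_ a2).
by rewrite (negbTE Hne).
Qed.

Lemma cert_net : is_33_net N.
Proof.
split; first split.
- case/andP: Hc => /andP[h1 _] _ [i a].
  by rewrite /N eval3_eq0; move/all_ord3: h1 => /(_ i) /all_ord3 /(_ a).
- move=> l1 l2 Hne [c Ec]; move: (cert_cross Hne); rewrite Ec cross_scale.
  by rewrite eqxx.
- move=> p i j a b Hp Hij; rewrite !on_lineE => /eqP Ha /eqP Hb k.
  have [c Ec] := meet_unique (cert_cross (pair_neq a b Hij)) Ha Hb.
  have cn : c != 0 by apply: contraNneq Hp => c0; rewrite Ec c0 scale0r.
  have -> : [set m | on_line p (N (k, m))] =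
            [set m | eis_det (Nz (i, a)) (Nz (j, b)) (Nz (k, m)) == eis0].
    apply/setP => m; rewrite !inE Ec on_lineZ // on_lineE dotC /N eval3_cross eval3_dot.
    by rewrite eval_eq0.
  rewrite card_ord3; apply/eqP; case/andP: Hc => _ h3.
  move/all_ord3: h3 => /(_ i) /all_ord3 /(_ j); rewrite (negbTE Hij) orFb.
  by move/all_ord3 => /(_ a) /all_ord3 /(_ b) /all_ord3 /(_ k).
Qed.

Lemma cert_conc i : concurrent N (class i) <->
  (eis_det (Nz (i, 0)) (Nz (i, 1)) (Nz (i, 2)) == eis0).
Proof.
have H01 : ((i, 0) : lineIdx) != (i, 1) by rewrite xpair_eqE eqxx.
split.
- move=> [p [Hp Hl]].
  have h k : dot (N (i, k)) p = 0 by apply/eqP; rewrite -on_lineE; apply: Hl; rewrite inE.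
  have [c Ec] := meet_unique (cert_cross H01) (h 0) (h 1).
  have cn : c != 0 by apply: contraNneq Hp => c0; rewrite Ec c0 scale0r.
  have /eqP := h 2.
  by rewrite Ec dotZr mulf_eq0 (negbTE cn) dotC /N eval3_cross eval3_dot eval_eq0.
- move=> Hd; exists (cross (N (i, 0)) (N (i, 1))); split; first exact: cert_cross.
  move=> [k m]; rewrite inE /= => /eqP ->; rewrite on_lineE dotC.
  case: (ord3 m) => ->; rewrite ?dot_cross_l ?dot_cross_r //.
  by move: Hd; rewrite /eis_det /N eval3_cross eval3_dot => /eqP ->; rewrite eval0.
Qed.

End Certificate.
End Eisenstein.

Section Rescale.
Variable C : numClosedFieldType.
Variables N N' : lineIdx -> 'rV[C]_3.
Hypothesis Hs : forall l, exists c, c != 0 /\ N l = c *: N' l.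

Lemma on_rescale p l : on_line p (N l) = on_line p (N' l).
Proof. by have [c [cn ->]] := Hs l; rewrite on_lineZr. Qed.

Lemma conc_rescale S : concurrent N S <-> concurrent N' S.
Proof. by split => -[p [Hp H]]; exists p; split => // l /H; rewrite on_rescale. Qed.

Lemma net_rescale : is_33_net N' -> is_33_net N.
Proof.
move=> [[H0 H1] H2]; split; first split.
- by move=> l; have [c [cn ->]] := Hs l; rewrite scaler_eq0 negb_or cn H0.
- move=> l1 l2 Hne [c Ec]; apply: (H1 l1 l2 Hne).
  have [c1 [c1n E1]] := Hs l1; have [c2 [c2n E2]] := Hs l2.
  exists (c1^-1 * c * c2); rewrite -!scalerA -E2 -Ec E1 scalerA mulVf ?scale1r //.
- move=> p i j a b Hp Hij; rewrite !on_rescale => Ha Hb k.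
  have -> : [set m | on_line p (N (k, m))] = [set m | on_line p (N' (k, m))].
    by apply/setP => m; rewrite !inE on_rescale.
  exact: H2 Hp Hij Ha Hb k.
Qed.

End Rescale.

Lemma exists_w (C : numClosedFieldType) : exists w : C, w ^+ 2 + w + 1 = 0.
Proof.
exists ((-1 + 'i * sqrtC 3) / 2).
have hs : sqrtC 3 ^+ 2 = 3 :> C by rewrite sqrtCK.
have hi : 'i ^+ 2 = -1 :> C by rewrite sqrCi.
have h2 : (2 : C) != 0 by rewrite pnatr_eq0.
transitivity ((3 + 'i ^+ 2 * sqrtC 3 ^+ 2) / 4 : C); first by field.
by rewrite hi hs mulN1r subrr mul0r.
Qed.

(* The three model arrangements with Eisenstein coordinates: the Ceva
   arrangement, three fibres of the Hesse pencil, and case3_arr 2 with its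
   line (0, 1) rescaled by 2. *)
Definition ceva_eis (l : lineIdx) : eis3 :=
  match (l.1 : nat) with
  | 0%N => (eis1, eis_opp (eis_wpow l.2), eis0)
  | 1%N => (eis0, eis1, eis_opp (eis_wpow l.2))
  | _ => (eis_opp (eis_wpow l.2), eis0, eis1)
  end.

Definition hesse_eis (l : lineIdx) : eis3 := (eis1, eis_wpow (l.2 + l.1)%N, eis_wpow (2 * l.2)%N).

Definition case3_eis (l : lineIdx) : eis3 :=
  nth eis3_0
    [:: (eis0, eis1, eis0); (eis1, eis_int 2, eis_int 2); (eis_int 2, eis0, eis1);
        (eis1, eis0, eis0); (eis1, eis_int 2, eis1); (eis0, eis_int 2, eis1);
        (eis1, eis_opp (eis_int 2), eis0); (eis1, eis1, eis1); (eis0, eis0, eis1)]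
    (3 * l.1 + l.2).

Lemma ceva_certificate : net_certificate ceva_eis. Proof. by vm_compute. Qed.
Lemma hesse_certificate : net_certificate hesse_eis. Proof. by vm_compute. Qed.
Lemma case3_certificate : net_certificate case3_eis. Proof. by vm_compute. Qed.

Lemma ceva_eis_conc : all (fun i =>
  eis_det (ceva_eis (i, 0)) (ceva_eis (i, 1)) (ceva_eis (i, 2)) == eis0) ord3s.
Proof. by vm_compute. Qed.

Lemma hesse_eis_conc : all (fun i =>
  eis_det (hesse_eis (i, 0)) (hesse_eis (i, 1)) (hesse_eis (i, 2)) != eis0) ord3s.
Proof. by vm_compute. Qed.

Lemma case3_eis_conc : all (fun i =>
  (eis_det (case3_eis (i, 0)) (case3_eis (i, 1)) (case3_eis (i, 2)) == eis0) == (i == 1)) ord3s.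
Proof. by vm_compute. Qed.


Section Models.
Variable C : numClosedFieldType.
Variable w : C.
Hypothesis Hw : w ^+ 2 + w + 1 = 0.

Lemma ceva_eval l : ceva w l = eval3 w (ceva_eis l).
Proof.
rewrite /ceva /ceva_eis; case: (l.1 : nat) => [|[|n]];
  by rewrite /eval3 /= ?(eval_opp, eval_wpow Hw, eval1, eval0).
Qed.

Lemma hesse_eval l : hesse w ord_max l = eval3 w (hesse_eis l).
Proof.
rewrite /hesse /hesse_line /hesse_eis.
have E : ((lift ord_max l.1 : 'I_4) : nat) = l.1 by rewrite lift_max.
rewrite E; move: E; case: l => [[i Hi] a] /= _; rewrite ltn_eqF //.
by rewrite /eval3 /= ?(eval_wpow Hw, eval1).
Qed.

Lemma case3_eval l : exists c : C, c != 0 /\ case3_arr 2 l = c *: eval3 w (case3_eis l).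
Proof.
have two_neq0 : (2 : C) != 0 by rewrite pnatr_eq0.
have E2 : eval w (eis_int 2) = 2 by rewrite eval_int.
have E1 : (2 : C) - 1 = 1 by ring.
case: l => i j; exists (if (i, j) == (0, 1) then 2^-1 else 1); split.
  by case: ifP => _; rewrite ?invr_eq0 ?two_neq0 ?oner_neq0.
case: (ord3 i) => ->; case: (ord3 j) => ->; rewrite /case3_arr /case3_eis /=.
all: apply: vec3_ext; rewrite scale_coord /eval3 !vec3E ?eval_opp ?E2 ?eval1 ?eval0.
all: rewrite ?mul1r ?E1 ?divr1 ?mulr1 ?mulr0 //.
all: try by rewrite mulVf.
ring.
Qed.

Section FromCertificate.
Variables (N : lineIdx -> 'rV[C]_3) (Nz : lineIdx -> eis3).
Hypothesis Hc : net_certificate Nz.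
Hypothesis Hs : forall l, exists c, c != 0 /\ N l = c *: eval3 w (Nz l).

Lemma model_net : is_33_net N.
Proof. exact: net_rescale Hs (cert_net Hw Hc). Qed.

Lemma model_conc i :
  (i \in conc_classes N) = (eis_det (Nz (i, 0)) (Nz (i, 1)) (Nz (i, 2)) == eis0).
Proof.
apply/conc_classesP/idP => [/(conc_rescale Hs)/(cert_conc Hw Hc) // | H].
by apply/(conc_rescale Hs)/(cert_conc Hw Hc).
Qed.

End FromCertificate.

Let unscaled (N : lineIdx -> 'rV[C]_3) Nz : (forall l, N l = eval3 w (Nz l)) ->
  forall l, exists c : C, c != 0 /\ N l = c *: eval3 w (Nz l).
Proof. by move=> E l; exists 1; rewrite oner_neq0 scale1r E. Qed.

Lemma ceva_model : is_33_net (ceva w) /\ conc_classes (ceva w) = setT.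
Proof.
have Hs := unscaled ceva_eval.
split; first exact: model_net ceva_certificate Hs.
apply/setP => i; rewrite in_setT (model_conc ceva_certificate Hs).
exact: all_ord3 ceva_eis_conc i.
Qed.

Lemma hesse_model : is_33_net (hesse w ord_max) /\ conc_classes (hesse w ord_max) = set0.
Proof.
have Hs := unscaled hesse_eval.
split; first exact: model_net hesse_certificate Hs.
apply/setP => i; rewrite in_set0 (model_conc hesse_certificate Hs).
exact/negbTE/(all_ord3 hesse_eis_conc).
Qed.

Lemma case3_model : is_33_net (case3_arr (2 : C)) /\ conc_classes (case3_arr (2 : C)) = [set 1].
Proof.
split; first exact: model_net case3_certificate case3_eval.
apply/setP => i; rewrite in_set1 (model_conc case3_certificate case3_eval).
by move: (all_ord3 case3_eis_conc i) => /eqP.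
Qed.

End Models.

Section Classification.
Variable C : numClosedFieldType.
Variable L : lineIdx -> 'rV[C]_3.
Hypothesis HL : is_33_net L.

(* By conc_third, the number of concurrent classes is never exactly 2. *)
Lemma card_conc_classes :
  [\/ #|conc_classes L| = 0%N, #|conc_classes L| = 1%N | #|conc_classes L| = 3%N].
Proof.
have : (#|conc_classes L| <= 3)%N by rewrite -[X in (_ <= X)%N](card_ord 3) max_card.
suff : #|conc_classes L| != 2%N.
  by case: #|conc_classes L| => [|[|[|[|n]]]] //= _ _; [apply: Or31|apply: Or32|apply: Or33].
apply/negP => /[dup] /cards2P [i [j [Hij Eij]]] /eqP H2.
have : #|~: conc_classes L| == 1%N by rewrite cardsCs setCK card_ord H2.
move/cards1P => [k Ek]; have : k \in ~: conc_classes L by rewrite Ek inE.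
rewrite inE => Hk.
have Hi : i \in conc_classes L by rewrite Eij !inE eqxx.
have Hj : j \in conc_classes L by rewrite Eij !inE eqxx orbT.
have Hik : i != k by apply: contraNneq Hk => <-.
have Hjk : j != k by apply: contraNneq Hk => <-.
move/negP: Hk; apply; apply/conc_classesP.
by apply: (conc_third HL Hij Hik Hjk); apply/conc_classesP.
Qed.

Lemma case1_of_all_conc : conc_classes L = setT -> case1 L.
Proof.
move=> E; have Hc : #|conc_classes L| = 3%N by rewrite E cardsT card_ord.
split; first by rewrite (card_pts2 HL) Hc.
split; first by rewrite (card_pts3 HL) Hc.
split; first by move=> i; rewrite (n_inner_triple_eq HL) E inE.
have [w Hw] := exists_w C; have [HM EM] := ceva_model Hw.
by exists w; split => //; apply: iso_of_conc_classes; rewrite ?E ?EM.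
Qed.

Lemma case2_of_no_conc : conc_classes L = set0 -> case2 L.
Proof.
move=> E; have Hc : #|conc_classes L| = 0%N by rewrite E cards0.
split; first by rewrite (card_pts2 HL) Hc.
split; first by rewrite (card_pts3 HL) Hc.
split; first by rewrite (n_nonmixed_triple_eq HL) Hc.
have [w Hw] := exists_w C; have [HM EM] := hesse_model Hw.
by exists w, ord_max; split => //; apply: iso_of_conc_classes; rewrite ?E ?EM.
Qed.

(* With a single concurrent class i0, swap the classes i0 and 1 to match the
   model case3_arr 2, whose concurrent class is 1. *)
Lemma case3_of_one_conc i0 : conc_classes L = [set i0] -> case3 L.
Proof.
move=> E; have Hc : #|conc_classes L| = 1%N by rewrite E cards1.
split; first by rewrite (card_pts2 HL) Hc.
split; first by rewrite (card_pts3 HL) Hc.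
split.
  exists i0; split; first by rewrite (n_inner_triple_eq HL) E set11.
  by move=> i' Hi'; rewrite (n_inner_triple_eq HL) E in_set1 (negbTE Hi').
exists 2; split; first by rewrite pnatr_eq0.
split; first by rewrite -subr_eq0 (_ : (2 : C) - 1 = 1) ?oner_neq0 //; ring.
split; first by rewrite -subr_eq0 opprK (_ : (2 : C) ^+ 3 + 1 = 9%:R) ?pnatr_eq0 //; ring.
have [w Hw] := exists_w C; have [HM EM] := case3_model Hw.
pose s := tperm i0 1; apply: (relabel_iso (s := s)).
apply: (iso_of_conc_classes (relabel_net s HL) HM); rewrite EM.
apply/setP => j; rewrite relabel_conc_classes E !in_set1 -{1}(tpermR i0 1).
by rewrite (inj_eq perm_inj).
Qed.

End Classification.

Lemma net_classification (C : numClosedFieldType) (L : lineIdx -> 'rV[C]_3) :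
  is_33_net L -> case1 L \/ case2 L \/ case3 L.
Proof.
move=> HL; case: (card_conc_classes HL) => Hc.
- by right; left; apply: case2_of_no_conc => //; apply: cards0_eq.
- by right; right; move/eqP/cards1P: Hc => [i0 E]; apply: case3_of_one_conc E.
- left; apply: case1_of_all_conc => //.
  by apply/eqP; rewrite eqEcard subsetT cardsT card_ord Hc.
Qed.

Theorem theorem2p2 (C : numClosedFieldType) :
  (forall L : lineIdx -> 'rV[C]_3, is_33_net L ->
     (* every intersection point is a double or triple point *)
     (forall p : 'rV[C]_3, p != 0 -> (2 <= #|through L p|)%N ->
        #|through L p| = 2%N \/ #|through L p| = 3%N) /\
     (* mixed triple points are triple points *)
     (forall p : 'rV[C]_3, p != 0 ->
        (forall i : 'I_3, exists j : 'I_3, on_line p (L (i, j))) ->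
        #|through L p| = 3%N) /\
     (n_nonmixed_triple L = 0%N \/ n_nonmixed_triple L = 1%N \/
      n_nonmixed_triple L = 3%N) /\
     #|pts L 3| <> 11%N /\
     (case1 L \/ case2 L \/ case3 L)) /\
  (exists L : lineIdx -> 'rV[C]_3, is_33_net L /\ case1 L) /\
  (exists L : lineIdx -> 'rV[C]_3, is_33_net L /\ case2 L) /\
  (exists L : lineIdx -> 'rV[C]_3, is_33_net L /\ case3 L).
Proof.
have [w Hw] := exists_w C.
have [Hceva Eceva] := ceva_model Hw.
have [Hhesse Ehesse] := hesse_model Hw.
have [Hcase3 Ecase3] := case3_model Hw.
split.
  move=> L HL; split; first exact: double_or_triple HL.
  split; first exact: mixed_triple HL.
  rewrite (n_nonmixed_triple_eq HL) (card_pts3 HL).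
  split; first by case: (card_conc_classes HL) => ->; auto.
  split; first by case: (card_conc_classes HL) => ->.
  exact: net_classification.
split; first by exists (ceva w); split; last exact: case1_of_all_conc.
split; first by exists (hesse w ord_max); split; last exact: case2_of_no_conc.
by exists (case3_arr 2); split; last exact: case3_of_one_conc Ecase3.
Qed.
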